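(* Let $N=2^h$ with $h\ge 2$, $\Delta,\varepsilon>0$, $\sigma^2=2\Delta^2/\varepsilon^2$ and $V(N)=2(\log_2N-1)$. Consider the binary tree mechanism $\mathcal{T}_{N,\Delta,\varepsilon}$ applied to a sequence $(y_t)_{t\ge1}$ of nonnegative reals, and let $I$ be a set of consecutive indices. (1) If $|I|\le N/2$, there is an estimator $\hat S(I)$, equal to a sum of released noisy tree-node values, with $\mathbb{E}[\hat S(I)]=\sum_{t\in I}y_t$ and $\mathrm{Var}[\hat S(I)]\le V(N)\,\sigma^2$. (2) If $|I|>N/2$, write $|I|=kN/2+R$ with integers $k\ge1$ and $0\le R<N/2$. Then there is such an estimator, equal to a sum of released noisy values (possibly from several containers), with $\mathbb{E}[\hat S(I)]=\sum_{t\in I}y_t$ and $\mathrm{Var}[\hat S(I)]\le (k+V(N))\,\sigma^2$.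
   Context: Binary tree mechanism with shadow releases $\mathcal{T}_{N,\Delta,\varepsilon}$ ($N=2^h$) on an input sequence $(y_t)_{t\ge1}$: indices are partitioned into containers $C_k=\{(k-1)N+1,\dots,kN\}$, $k=1,2,\dots$. For each container, build a complete binary tree $\mathcal{B}_N$ whose leaves are the indices of $C_k$ in order; a node $v$ at depth $d$ (root at depth $0$) corresponds to a block of $2^{h-d}$ consecutive leaves, and $\mathrm{sum}(v)=\sum_{t\in\mathrm{leaves}(v)}y_t$. The mechanism releases $\tilde s(v)=\mathrm{sum}(v)+\eta_v$ for every node $v$ of every container's tree, and for each container $k$ one shadow release $\sum_{t=(k-1)N+N/2+1}^{kN}y_t+\eta'_k$, where all $\eta_v,\eta'_k$ are independent $\mathrm{Lap}(\Delta/\varepsilon)$ random variables (each of variance $2\Delta^2/\varepsilon^2$). *)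

From HB Require Import structures.
From mathcomp Require Import all_boot all_order all_algebra.
From mathcomp Require Import all_classical all_reals all_analysis.
Set Implicit Arguments. Unset Strict Implicit. Unset Printing Implicit Defensive.
Import Order.TTheory GRing.Theory Num.Theory.
Local Open Scope ring_scope.

(* Labels of the values released by the binary tree mechanism with shadow
   releases T_{N,Delta,eps}, N = 2^h.
   - Node k d j : node of depth d (root = depth 0), j-th from the left
     (0 <= j < 2^d), in the tree of container k (k >= 1).
   - Shadow k   : the shadow release of container k (k >= 1). *)
Inductive release_label := Node of nat & nat & nat | Shadow of nat.

Definition label_valid (h : nat) (l : release_label) : bool :=
  match l with
  | Node k d j => [&& 0 < k, d <= h & j < 2 ^ d]
  | Shadow k => 0 < k
  end%N.

(* Underlying (noiseless) sum of a released value; indices t start at 1.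
   Container C_k = {(k-1)N+1, ..., kN}. *)
Definition label_sum {R : numDomainType} (h : nat) (y : nat -> R)
    (l : release_label) : R :=
  match l with
  | Node k d j =>
      let w := (2 ^ (h - d))%N in
      let s := ((k.-1) * 2 ^ h + j * w).+1%N in
      \sum_(s <= t < s + w) y t
  | Shadow k =>
      let s := ((k.-1) * 2 ^ h + (2 ^ h)./2).+1%N in
      \sum_(s <= t < s + (2 ^ h)./2) y t
  end.

Definition released {R : numDomainType} {T : Type} (h : nat) (y : nat -> R)
    (eta : release_label -> T -> R) (l : release_label) : T -> R :=
  fun w => label_sum h y l + eta l w.

Definition sum_released {R : numDomainType} {T : Type} (h : nat)
    (y : nat -> R) (eta : release_label -> T -> R) (L : seq release_label)
    : T -> R :=
  fun w => \sum_(l <- L) released h y eta l w.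

Definition label_enc (l : release_label) : (nat * nat * nat) + nat :=
  match l with Node k d j => inl (k, d, j) | Shadow k => inr k end.
Definition label_dec (x : (nat * nat * nat) + nat) : release_label :=
  match x with inl (k, d, j) => Node k d j | inr k => Shadow k end.
Lemma label_encK : cancel label_enc label_dec.
Proof. by case. Qed.
HB.instance Definition _ := Equality.copy release_label (can_type label_encK).

From HB Require Import structures.
From mathcomp Require Import all_boot all_order all_algebra.
From mathcomp Require Import all_classical all_reals all_analysis.
From mathcomp Require Import zify.
Import Order.TTheory GRing.Theory Num.Theory.
Set Implicit Arguments. Unset Strict Implicit. Unset Printing Implicit Defensive.

(* An interval of positions is cut at a point c divisible by 2^J into a left
   and a right part; each part is a disjoint union of aligned dyadic blocks read
   off the binary digits of its length: floor(len / 2^J) blocks of size 2^J and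
   at most one block of each smaller size.  Aligned blocks of size at most N are
   tree nodes, so the sum of their releases is unbiased, and since the noises
   are uncorrelated its variance is sigma^2 times the number of blocks.
   If |I| <= N/2, cut at the coarsest dyadic point c inside I, of level J' say:
   both parts have length at most 2^J' and need at most max(J', 1) <= h - 1
   blocks each.  If |I| > N/2, cut at the first multiple of N/2 = 2^(h-1) in I:
   the left part needs at most h - 1 blocks, the right part at most k + h - 1. *)

Local Open Scope nat_scope.

Fixpoint dyadic_digits (J s : nat) : seq nat :=
  if J is J'.+1 then nseq (s %/ 2 ^ J) J ++ dyadic_digits J' (s %% 2 ^ J)
  else nseq s 0.

Definition span (bs : seq nat) : nat := \sum_(b <- bs) 2 ^ b.

Lemma span_cat bs1 bs2 : span (bs1 ++ bs2) = span bs1 + span bs2.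
Proof. exact: big_cat. Qed.

Lemma span_nseq q b : span (nseq q b) = q * 2 ^ b.
Proof. by rewrite /span big_nseq iter_addn_0 mulnC. Qed.

Lemma span_dyadic_digits J s : span (dyadic_digits J s) = s.
Proof.
elim: J s => [|J IH] s /=; first by rewrite span_nseq muln1.
by rewrite span_cat span_nseq IH -divn_eq.
Qed.

Lemma path_geq_nseq_cat b q bs : path geq b bs -> path geq b (nseq q b ++ bs).
Proof. by elim: q => //= q IH /IH ->; rewrite leqnn. Qed.

Lemma path_dyadic_digits J s : path geq J (dyadic_digits J s).
Proof.
elim: J s => [|J IH] s /=; first by rewrite -[nseq s 0]cats0 path_geq_nseq_cat.
apply: path_geq_nseq_cat.
by case: (dyadic_digits J _) (IH (s %% 2 ^ J.+1)) => //= b bs /andP[/leqW ->].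
Qed.

Lemma modn_expS_div_le1 s J : s %% 2 ^ J.+1 %/ 2 ^ J <= 1.
Proof. by rewrite -ltnS ltn_divLR ?expn_gt0 // -expnS ltn_pmod ?expn_gt0. Qed.

Lemma size_dyadic_digits J s : size (dyadic_digits J s) <= s %/ 2 ^ J + J.
Proof.
elim: J s => [|J IH] s /=; first by rewrite size_nseq expn0 divn1 addn0.
rewrite size_cat size_nseq.
have := IH (s %% 2 ^ J.+1); have := modn_expS_div_le1 s J; lia.
Qed.

Lemma size_dyadic_digits_small J s : s < 2 ^ J -> size (dyadic_digits J s) <= J.
Proof. by move=> sJ; have := size_dyadic_digits J s; rewrite divn_small. Qed.

Lemma size_dyadic_digits_le_pow J s : s <= 2 ^ J -> size (dyadic_digits J s) <= maxn J 1.
Proof.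
rewrite leq_eqVlt => /orP[/eqP-> | /size_dyadic_digits_small]; last by rewrite leq_max => ->.
have -> : size (dyadic_digits J (2 ^ J)) = 1.
  case: J => [|J] //=; rewrite divnn expn_gt0 modnn /=.
  by elim: J => //= J; rewrite div0n mod0n.
by rewrite leq_maxr.
Qed.

Fixpoint layout_from (c : nat) (bs : seq nat) : seq (nat * nat) :=
  if bs is b :: bs' then (c, b) :: layout_from (c + 2 ^ b) bs' else [::].

Fixpoint layout_to (c : nat) (bs : seq nat) : seq (nat * nat) :=
  if bs is b :: bs' then rcons (layout_to (c - 2 ^ b) bs') (c - 2 ^ b, b) else [::].

Lemma size_layout_from c bs : size (layout_from c bs) = size bs.
Proof. by elim: bs c => //= b bs IH c; rewrite IH. Qed.

Lemma size_layout_to c bs : size (layout_to c bs) = size bs.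
Proof. by elim: bs c => //= b bs IH c; rewrite size_rcons IH. Qed.

(* A pair (x, b) is the block of 2^b positions x, ..., x + 2^b - 1; position p
   stands for the index p + 1 of the input sequence. *)
Fixpoint tiling (lo hi : nat) (L : seq (nat * nat)) : bool :=
  if L is x :: L' then (x.1 == lo) && tiling (x.1 + 2 ^ x.2) hi L' else lo == hi.

Lemma tiling_cat lo mid hi L1 L2 :
  tiling lo mid L1 -> tiling mid hi L2 -> tiling lo hi (L1 ++ L2).
Proof.
elim: L1 lo => [|x L1 IH] lo /=; first by move/eqP->.
by case/andP=> -> /IH H /H.
Qed.

Lemma tiling_le lo hi L : tiling lo hi L -> (lo <= hi) && all (fun x => lo <= x.1) L.
Proof.
elim: L lo => [|x L IH] lo /=; first by move/eqP->; rewrite leqnn.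
case/andP=> /eqP-> /IH /andP[lohi lo_all]; rewrite leqnn (leq_trans (leq_addr _ _) lohi) /=.
by apply: sub_all lo_all => z; apply: leq_trans; rewrite leq_addr.
Qed.

Lemma tiling_uniq lo hi L : tiling lo hi L -> uniq (map fst L).
Proof.
elim: L lo => [|x L IH] lo //= /andP[_ T]; rewrite (IH _ T) andbT.
have /andP[_ /allP lo_all] := tiling_le T.
apply/mapP=> -[z /lo_all + ez]; rewrite -ez; have := expn_gt0 2 x.2; lia.
Qed.

Lemma tiling_layout_from c bs : tiling c (c + span bs) (layout_from c bs).
Proof.
elim: bs c => [|b bs IH] c /=; first by rewrite /span big_nil addn0.
by rewrite eqxx /span big_cons addnA IH.
Qed.

Lemma tiling_layout_to c bs : span bs <= c -> tiling (c - span bs) c (layout_to c bs).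
Proof.
elim: bs c => [|b bs IH] c /=; first by rewrite /span big_nil subn0.
rewrite /span big_cons -cats1 => le_c.
have -> : c - (2 ^ b + span bs) = c - 2 ^ b - span bs by rewrite subnDA.
apply: tiling_cat (IH _ _) _; first by rewrite /span; lia.
by rewrite /= eqxx subnK //; lia.
Qed.

Definition aligned (J : nat) (x : nat * nat) : bool := (x.2 <= J) && (2 ^ x.2 %| x.1).

Lemma aligned_le J J' : J <= J' -> subpred (aligned J) (aligned J').
Proof. by move=> JJ' x /andP[xJ dvd_x]; rewrite /aligned dvd_x (leq_trans xJ JJ'). Qed.

Lemma aligned_layout_from J c bs :
  path geq J bs -> 2 ^ J %| c -> all (aligned J) (layout_from c bs).
Proof.
elim: bs J c => //= b bs IH J c /andP[bJ bs_path] dvd_c.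
have dvd_bc : 2 ^ b %| c by rewrite (dvdn_trans _ dvd_c) // dvdn_exp2l.
apply/andP; split; first by rewrite /aligned bJ dvd_bc.
apply: (sub_all (@aligned_le b J bJ)).
by apply: IH; rewrite ?dvdn_add.
Qed.

Lemma aligned_layout_to J c bs :
  path geq J bs -> 2 ^ J %| c -> all (aligned J) (layout_to c bs).
Proof.
elim: bs J c => //= b bs IH J c /andP[bJ bs_path] dvd_c.
have dvd_bc : 2 ^ b %| c - 2 ^ b by rewrite dvdn_sub // (dvdn_trans _ dvd_c) // dvdn_exp2l.
rewrite all_rcons; apply/andP; split; first by rewrite /aligned bJ dvd_bc.
apply: (sub_all (@aligned_le b J bJ)).
exact: IH.
Qed.

Definition dyadic_cover (J c u v : nat) : seq (nat * nat) :=
  layout_to c (dyadic_digits J (c - u)) ++ layout_from c (dyadic_digits J (v - c)).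

Lemma tiling_dyadic_cover J c u v : u <= c <= v -> tiling u v (dyadic_cover J c u v).
Proof.
case/andP=> uc cv; apply: (@tiling_cat _ c).
  have := @tiling_layout_to c (dyadic_digits J (c - u)).
  by rewrite span_dyadic_digits subKn // => ->; rewrite ?leq_subr.
by have := tiling_layout_from c (dyadic_digits J (v - c)); rewrite span_dyadic_digits subnKC.
Qed.

Lemma aligned_dyadic_cover J c u v : 2 ^ J %| c -> all (aligned J) (dyadic_cover J c u v).
Proof.
by move=> dvd_c; rewrite all_cat aligned_layout_to ?aligned_layout_from ?path_dyadic_digits.
Qed.

Lemma size_dyadic_cover J c u v :
  size (dyadic_cover J c u v) = size (dyadic_digits J (c - u)) + size (dyadic_digits J (v - c)).
Proof. by rewrite size_cat size_layout_to size_layout_from. Qed.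

Lemma exists_dvdn_window B u : 0 < B -> exists2 c, B %| c & u <= c < u + B.
Proof.
move=> B_gt0; have [dvd_u | ndvd_u] := boolP (B %| u).
  by exists u => //; lia.
exists ((u %/ B).+1 * B); first exact: dvdn_mull.
have := divn_eq u B; have := ltn_pmod u B_gt0.
by move: ndvd_u; rewrite /dvdn mulSn; move: (u %/ B * B) (u %% B) => ? ?; lia.
Qed.

Lemma dyadic_split_point J u v : u <= v -> v - u <= 2 ^ J ->
  exists J', exists2 c, J' <= J /\ 2 ^ J' %| c &
    [/\ u <= c <= v, c - u <= 2 ^ J' & v - c <= 2 ^ J'].
Proof.
elim: J u v => [|J IH] u v uv len_uv.
  by exists 0, u; rewrite ?dvd1n // expn0 in len_uv *; split; lia.
have pow_gt0 := expn_gt0 2 J.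
have pow_S : 2 ^ J.+1 = 2 ^ J + 2 ^ J by rewrite expnS mul2n addnn.
have [c dvd_c /andP[uc cu]] := exists_dvdn_window u (expn_gt0 2 J.+1).
have [cv | vc] := leqP c v.
  by exists J.+1, c; [rewrite leqnn | split; lia].
have dvd_mid : 2 ^ J %| c - 2 ^ J by rewrite dvdn_sub // (dvdn_trans _ dvd_c) // dvdn_exp2l.
have [mid_in | mid_out] := boolP (u <= c - 2 ^ J <= v).
  by exists J, (c - 2 ^ J); [rewrite leqnSn | move: mid_in => /andP[? ?]; split; lia].
(* [u, v] lies in one half of the aligned block [c - 2^J.+1, c). *)
have [J' [c' [J'J dvd_c'] spl]] := IH u v uv ltac:(move: mid_out; lia).
by exists J', c' => //; rewrite leqW.
Qed.

Lemma short_interval_cover J u m : 0 < J -> m <= 2 ^ J ->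
  exists L, [/\ tiling u (u + m) L, all (aligned J) L & size L <= 2 * J].
Proof.
move=> J_gt0 m_le.
have [|J' [c [J'J dvd_c] [ucv cu vc]]] := @dyadic_split_point J u (u + m) (leq_addr _ _).
  by rewrite addKn.
exists (dyadic_cover J' c u (u + m)); split.
- exact: tiling_dyadic_cover.
- exact: (sub_all (@aligned_le J' J J'J) (aligned_dyadic_cover u (u + m) dvd_c)).
- rewrite size_dyadic_cover.
  have := size_dyadic_digits_le_pow cu; have := size_dyadic_digits_le_pow vc; lia.
Qed.

Lemma long_interval_cover J u m : 2 ^ J <= m ->
  exists L, [/\ tiling u (u + m) L, all (aligned J) L & size L <= m %/ 2 ^ J + 2 * J].
Proof.
move=> m_ge; have [c dvd_c /andP[uc cu]] := exists_dvdn_window u (expn_gt0 2 J).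
exists (dyadic_cover J c u (u + m)); split.
- by apply: tiling_dyadic_cover; rewrite uc; lia.
- exact: aligned_dyadic_cover.
- have left_short : c - u < 2 ^ J by lia.
  have right_quot : (u + m - c) %/ 2 ^ J <= m %/ 2 ^ J by apply: leq_div2r; lia.
  rewrite size_dyadic_cover; have := size_dyadic_digits_small left_short.
  have := size_dyadic_digits J (u + m - c); lia.
Qed.

Definition block_label (h : nat) (x : nat * nat) : release_label :=
  Node (x.1 %/ 2 ^ h).+1 (h - x.2) (x.1 %% 2 ^ h %/ 2 ^ x.2).

Definition label_start (h : nat) (l : release_label) : nat :=
  if l is Node k d j then k.-1 * 2 ^ h + j * 2 ^ (h - d) else 0.

Lemma block_label_offset h x :
  aligned h x -> x.1 %% 2 ^ h %/ 2 ^ x.2 * 2 ^ (h - (h - x.2)) = x.1 %% 2 ^ h.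
Proof.
case/andP=> xh dvd_x; rewrite subKn // divnK //.
by rewrite /dvdn modn_dvdm ?dvdn_exp2l.
Qed.

Lemma block_label_valid h x : aligned h x -> label_valid h (block_label h x).
Proof.
case/andP=> xh _; rewrite /= leq_subr /= ltn_divLR ?expn_gt0 //.
by rewrite -expnD subnK // ltn_pmod ?expn_gt0.
Qed.

Lemma block_labelK h x : aligned h x -> label_start h (block_label h x) = x.1.
Proof. by move=> x_al; rewrite /= block_label_offset // -divn_eq. Qed.

Local Open Scope ring_scope.

Definition segment_sum {R : numDomainType} (y : nat -> R) (lo hi : nat) : R :=
  \sum_(lo.+1 <= t < hi.+1) y t.

Lemma segment_sum_cat {R : numDomainType} (y : nat -> R) lo mid hi :
  (lo <= mid <= hi)%N -> segment_sum y lo mid + segment_sum y mid hi = segment_sum y lo hi.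
Proof. by case/andP=> lo_mid mid_hi; rewrite /segment_sum -big_cat_nat. Qed.

Lemma label_sum_block_label {R : numDomainType} h (y : nat -> R) x : aligned h x ->
  label_sum h y (block_label h x) = segment_sum y x.1 (x.1 + 2 ^ x.2)%N.
Proof.
move=> x_al; have /andP[xh _] := x_al.
by rewrite /label_sum /segment_sum /= block_label_offset // -divn_eq subKn // addSn.
Qed.

Lemma tiling_sum {R : numDomainType} (y : nat -> R) lo hi L : tiling lo hi L ->
  \sum_(x <- L) segment_sum y x.1 (x.1 + 2 ^ x.2)%N = segment_sum y lo hi.
Proof.
elim: L lo => [|x L IH] lo /=; first by move/eqP->; rewrite big_nil /segment_sum big_geq.
case/andP=> /eqP x_lo T; rewrite big_cons (IH _ T) x_lo segment_sum_cat //.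
by have /andP[+ _] := tiling_le T; rewrite x_lo leq_addr.
Qed.

Lemma tiling_block_labels {R : numDomainType} h (y : nat -> R) lo hi L :
  tiling lo hi L -> all (aligned h) L ->
  [/\ uniq (map (block_label h) L), all (label_valid h) (map (block_label h) L)
    & \sum_(l <- map (block_label h) L) label_sum h y l = segment_sum y lo hi].
Proof.
move=> T /allP L_al; split.
- apply: (@map_uniq _ _ (label_start h)); rewrite -map_comp.
  have -> : map (label_start h \o block_label h) L = map fst L.
    by apply/eq_in_map => x /L_al /block_labelK.
  exact: tiling_uniq T.
- by rewrite all_map; apply/allP => x /L_al /block_label_valid.
- rewrite big_map -(tiling_sum y T); apply: eq_big_seq => x /L_al.
  exact: label_sum_block_label.
Qed.

Section UncorrelatedNoise.
Context (d : measure_display) (T : measurableType d) (R : realType) (P : probability T R).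
Variables (eta : release_label -> T -> R) (s2 : R).
Hypothesis eta_L2 : forall l, eta l \in Lfun P 2%:E.
Hypothesis eta_centered : forall l, ('E_P[eta l] = 0)%E.
Hypothesis eta_variance : forall l, 'V_P[eta l] = s2%:E.
Hypothesis eta_uncorrelated :
  forall l l', l <> l' -> covariance P (eta l) (eta l') = 0%E.

Lemma covariance_sum_uncorrelated l L :
  l \notin L -> covariance P (eta l) (\sum_(l' <- L) eta l') = 0%E.
Proof.
elim: L => [|l' L IH]; first by rewrite big_nil => _; exact: covariance_cst_r.
rewrite inE negb_or => /andP[l_neq /IH cov_L].
rewrite big_cons covarianceDr ?rpred_sum ?lee1n // cov_L eta_uncorrelated ?adde0 //.
exact/eqP.
Qed.

Lemma variance_sum_uncorrelated L :
  uniq L -> 'V_P[\sum_(l <- L) eta l] = ((size L)%:R * s2)%:E.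
Proof.
elim: L => [|l L IH] /=; first by rewrite big_nil mul0r => _; exact: variance_cst.
case/andP=> l_notin /IH var_L.
rewrite big_cons varianceD ?rpred_sum ?lee1n // var_L eta_variance.
by rewrite covariance_sum_uncorrelated // mule0 adde0 -EFinD -natr1 mulrDl mul1r addrC.
Qed.

Lemma sum_releasedE h y L : sum_released h y eta L =
  (cst (\sum_(l <- L) label_sum h y l) \+ \sum_(l <- L) eta l)%R.
Proof.
by apply/funext => w; rewrite /sum_released /released big_split /= fct_sumE.
Qed.

Lemma expectation_sum_released h y L :
  ('E_P[sum_released h y eta L] = (\sum_(l <- L) label_sum h y l)%:E)%E.
Proof.
have P_fin : P setT \is a fin_num := fin_num_measure P _ measurableT.
have eta_L1 l := Lfun_subset12 P_fin (eta_L2 l).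
rewrite sum_releasedE expectationD ?Lfun_cst ?rpred_sum // expectation_cst.
rewrite -(big_map eta xpredT id) expectation_sum; last by move=> _ /mapP[l _ ->].
rewrite big_map; under eq_bigr do rewrite eta_centered.
by rewrite big1_eq adde0.
Qed.

Lemma variance_sum_released h y L :
  uniq L -> 'V_P[sum_released h y eta L] = ((size L)%:R * s2)%:E.
Proof.
move=> L_uniq; rewrite sum_releasedE varianceD_cst_l ?rpred_sum ?lee1n //.
exact: variance_sum_uncorrelated.
Qed.

Lemma tiling_estimator h J y u v L0 n : 0 <= s2 -> (J <= h)%N ->
  tiling u v L0 -> all (aligned J) L0 -> (size L0 <= n)%N ->
  exists L : seq release_label,
    [/\ uniq L, all (label_valid h) L,
        all (fun l => if l is Node _ _ _ then true else false) L,
        ('E_P[sum_released h y eta L] = (segment_sum y u v)%:E)%E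
      & ('V_P[sum_released h y eta L] <= (n%:R * s2)%:E)%E].
Proof.
move=> s2_ge0 Jh L0_tiling L0_aligned L0_size.
have [L_uniq L_valid L_sum] :=
  tiling_block_labels y L0_tiling (sub_all (@aligned_le J h Jh) L0_aligned).
exists (map (block_label h) L0); split => //.
- by rewrite all_map; apply/allP.
- by rewrite expectation_sum_released L_sum.
- by rewrite variance_sum_released // size_map lee_fin ler_wpM2r // ler_nat.
Qed.

End UncorrelatedNoise.

Theorem mainTheorem3 (d : measure_display) (T : measurableType d)
  (R : realType) (P : probability T R)
  (h : nat) (Delta eps : R) (y : nat -> R)
  (eta : release_label -> T -> R)
  (a m : nat) :
  (2 <= h)%N -> 0 < Delta -> 0 < eps ->
  (forall t, (1 <= t)%N -> 0 <= y t) ->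
  (* the noises: measurable, square integrable, centered, of variance
     sigma^2 = 2 Delta^2 / eps^2, and pairwise uncorrelated (as independent
     Lap(Delta/eps) variables are) *)
  (forall l, measurable_fun setT (eta l)) ->
  (forall l, eta l \in Lfun P 2%:E) ->
  (forall l, ('E_P[eta l] = 0)%E) ->
  (forall l, 'V_P[eta l] = (2 * Delta ^+ 2 / eps ^+ 2)%:E) ->
  (forall l l', l <> l' -> covariance P (eta l) (eta l') = 0%E) ->
  (* I = {a, ..., a + m - 1}, a set of consecutive indices *)
  (1 <= a)%N ->
  ((m <= (2 ^ h)./2)%N ->
     exists L : seq release_label,
       [/\ uniq L, all (label_valid h) L,
           all (fun l => if l is Node _ _ _ then true else false) L,
           ('E_P[sum_released h y eta L] = (\sum_(a <= t < a + m) y t)%:E)%E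
         & ('V_P[sum_released h y eta L]
             <= ((2 * (h - 1)%N)%:R * (2 * Delta ^+ 2 / eps ^+ 2))%:E)%E])
  /\
  (forall k r : nat, ((2 ^ h)./2 < m)%N -> m = (k * (2 ^ h)./2 + r)%N ->
     (1 <= k)%N -> (r < (2 ^ h)./2)%N ->
     exists L : seq release_label,
       [/\ uniq L, all (label_valid h) L,
           ('E_P[sum_released h y eta L] = (\sum_(a <= t < a + m) y t)%:E)%E
         & ('V_P[sum_released h y eta L]
             <= ((k + 2 * (h - 1))%N%:R * (2 * Delta ^+ 2 / eps ^+ 2))%:E)%E]).
Proof.
move=> h_ge2 _ _ _ _ eta_L2 eta_centered eta_variance eta_uncorrelated a_ge1.
set s2 := 2 * Delta ^+ 2 / eps ^+ 2.
have s2_ge0 : 0 <= s2 := divr_ge0 (mulr_ge0 (ler0n _ 2) (sqr_ge0 _)) (sqr_ge0 _).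
have half_pow : ((2 ^ h)./2 = 2 ^ (h - 1))%N.
  by rewrite -[in LHS](subnK (ltnW h_ge2)) addn1 expnS mul2n doubleK.
have segment_I : segment_sum y a.-1 (a.-1 + m) = \sum_(a <= t < a + m) y t.
  by rewrite /segment_sum -addSn prednK.
rewrite half_pow; split => [m_le | k r m_gt m_eq _ r_lt].
- have [|L0 [L0_tiling L0_aligned L0_size]] := @short_interval_cover (h - 1) a.-1 m _ m_le.
    by rewrite subn_gt0.
  have [L [L_uniq L_valid L_nodes L_mean L_var]] :=
    tiling_estimator eta_L2 eta_centered eta_variance eta_uncorrelated y
      s2_ge0 (leq_subr 1 h) L0_tiling L0_aligned L0_size.
  by exists L; rewrite -segment_I.
- have k_eq : k = (m %/ 2 ^ (h - 1))%N by rewrite m_eq divnMDl ?expn_gt0 // divn_small ?addn0.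
  have [L0 [L0_tiling L0_aligned L0_size]] := @long_interval_cover (h - 1) a.-1 m (ltnW m_gt).
  rewrite -k_eq in L0_size.
  have [L [L_uniq L_valid _ L_mean L_var]] :=
    tiling_estimator eta_L2 eta_centered eta_variance eta_uncorrelated y
      s2_ge0 (leq_subr 1 h) L0_tiling L0_aligned L0_size.
  by exists L; rewrite -segment_I.
Qed.
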